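(* Let $u(x)$ be a Hastings–McLeod solution of the Painlevé II equation $u''(x)=2u(x)^3+xu(x)$, i.e. the solution with monodromy data $s_1=\pm\mathrm{i}$, $s_3=\mp\mathrm{i}$, $s_2=0$. Then for every $c\in\mathbb{R}$, $$\int_c^{+\infty}u(y)^2\,\mathrm{d}y+\int_{-\infty}^c\left(u(y)^2+\frac y2\right)\mathrm{d}y=\frac{c^2}{4}.$$
   Context: Monodromy data of Painlevé II: complex numbers $s_1,s_2,s_3$ with $s_1-s_2+s_3+s_1s_2s_3=0$. Let $\gamma_k=\mathrm{e}^{\mathrm{i}(2k-1)\pi/6}\mathbb{R}_+$, $k=1,\dots,6$, be rays oriented from $0$ to $\infty$, with jump matrices $S_1=\begin{pmatrix}1&0\\ s_1&1\end{pmatrix}$, $S_2=\begin{pmatrix}1&s_2\\0&1\end{pmatrix}$, $S_3=\begin{pmatrix}1&0\\ s_3&1\end{pmatrix}$, $S_4=\begin{pmatrix}1&-s_1\\0&1\end{pmatrix}$, $S_5=\begin{pmatrix}1&0\\ -s_2&1\end{pmatrix}$, $S_6=\begin{pmatrix}1&-s_3\\0&1\end{pmatrix}$. Let $\theta(\lambda;x)=\mathrm{i}(\tfrac43\lambda^3+x\lambda)$, $\sigma_3=\mathrm{diag}(1,-1)$. $\Psi(\lambda;x)$ is the $2\times2$ function analytic off $\cup_k\gamma_k$ with continuous boundary values, $\Psi_+=\Psi_-S_k$ on $\gamma_k$ ($+$ = left side), and $\Psi\mathrm{e}^{\theta\sigma_3}=I+O(1/\lambda)$ as $\lambda\to\infty$;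 then $u(x)=2\lim_{\lambda\to\infty}\lambda\Psi_{12}\mathrm{e}^{-\theta}$ solves Painlevé II, bijectively in the data, and is said to have monodromy data $(s_1,s_2,s_3)$. The Hastings–McLeod solutions are real and smooth on $\mathbb{R}$, with $u(x)=\mathrm{i}s_1\sqrt{-x/2}+O((-x)^{-5/2})$ as $x\to-\infty$ and $u(x)\approx\mathrm{i}s_1\mathrm{Ai}(x)$ as $x\to+\infty$. *)

From Stdlib Require Import Reals Lra.
From Coquelicot Require Import Coquelicot.
Open Scope R_scope.

Definition is_PII_solution (u u' : R -> R) : Prop :=
  forall x : R, is_derive u x (u' x) /\ is_derive u' x (2 * u x ^ 3 + x * u x).

(* Hastings-McLeod solution with sign eps = i*s1 (s1 = -i*eps, s3 = -s1 = i*eps,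
   s2 = 0), eps in {1,-1}:
   - as x -> -oo :  u(x) = eps * sqrt(-x/2) + O((-x)^(-5/2));
   - as x -> +oo :  u(x) ~ eps * Ai(x), stated via the classical asymptotic
     Ai(x) ~ x^(-1/4) exp(-(2/3) x^(3/2)) / (2 sqrt pi), i.e.
     u(x) * 2 sqrt(pi) x^(1/4) exp((2/3) x^(3/2)) -> eps. *)
Definition hastings_mcleod (u : R -> R) (eps : R) : Prop :=
  (eps = 1 \/ eps = -1) /\
  (exists u' : R -> R, is_PII_solution u u') /\
  (exists M K : R, K < 0 /\
     forall x : R, x <= K ->
       Rabs (u x - eps * sqrt (- x / 2)) <= M * Rpower (- x) (- 5 / 2)) /\
  is_lim (fun x => u x * (2 * sqrt PI * Rpower x (1 / 4)
                          * exp (2 / 3 * Rpower x (3 / 2))))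
         p_infty eps.

(* With the Painleve II Hamiltonian H = u^4 + x u^2 - u'^2 one has H' = u^2 and
   x^2/4 + H = (u^2 + x/2)^2 - u'^2.  Airy decay at +oo makes u and x u^2 vanish there,
   the square-root asymptotics at -oo make u^2 + x/2 vanish there, and in both
   regimes u'' stays bounded, so interpolating between u and u'' gives u' -> 0.
   Hence H(+oo) = 0 and (x^2/4 + H)(-oo) = 0, and the two integrals are
   -H(c) and c^2/4 + H(c). *)

From Stdlib Require Import Reals Lra Psatz.
From Coquelicot Require Import Coquelicot.
Open Scope R_scope.

Lemma is_lim_0_iff (f : R -> R) (p : Rbar) :
  is_lim f p 0 <-> forall e, 0 < e -> Rbar_locally' p (fun x => Rabs (f x) < e).
Proof.
  split.
  - intros Hf e He. apply is_lim_spec in Hf.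
    apply (filter_imp (fun x => Rabs (f x - 0) < e)); [intros x; now rewrite Rminus_0_r|].
    exact (Hf (mkposreal e He)).
  - intros Hf. apply is_lim_spec. intros e.
    apply (filter_imp (fun x => Rabs (f x) < e)); [intros x; now rewrite Rminus_0_r|].
    exact (Hf e (cond_pos e)).
Qed.

Lemma is_lim_0_abs_le (f g : R -> R) (p : Rbar) :
  Rbar_locally' p (fun x => Rabs (f x) <= g x) -> is_lim g p 0 -> is_lim f p 0.
Proof.
  intros Hfg Hg. apply (is_lim_le_le_loc (fun x => - g x) g); [| |exact Hg].
  - revert Hfg; apply filter_imp; intros x Hx.
    pose proof (Rle_abs (f x)); pose proof (Rle_abs (- f x)).
    rewrite Rabs_Ropp in *; lra.
  - replace (Finite 0) with (Rbar_opp 0) by (simpl; f_equal; ring).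
    now apply is_lim_opp.
Qed.

Lemma is_lim_0_plus (f g : R -> R) (p : Rbar) :
  is_lim f p 0 -> is_lim g p 0 -> is_lim (fun x => f x + g x) p 0.
Proof.
  intros Hf Hg. replace (Finite 0) with (Finite (0 + 0)) by (f_equal; ring).
  now apply is_lim_plus'.
Qed.

Lemma is_lim_0_minus (f g : R -> R) (p : Rbar) :
  is_lim f p 0 -> is_lim g p 0 -> is_lim (fun x => f x - g x) p 0.
Proof.
  intros Hf Hg. replace (Finite 0) with (Finite (0 - 0)) by (f_equal; ring).
  now apply is_lim_minus'.
Qed.

Lemma is_lim_0_mult (f g : R -> R) (p : Rbar) :
  is_lim f p 0 -> is_lim g p 0 -> is_lim (fun x => f x * g x) p 0.
Proof.
  intros Hf Hg. replace (Finite 0) with (Rbar_mult 0 0) by (simpl; f_equal; ring).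
  apply is_lim_mult; simpl; auto.
Qed.

Lemma is_lim_0_scal (a : R) (f : R -> R) (p : Rbar) :
  is_lim f p 0 -> is_lim (fun x => a * f x) p 0.
Proof.
  intros Hf. replace (Finite 0) with (Rbar_mult a 0) by (simpl; f_equal; ring).
  now apply is_lim_scal_l.
Qed.

Lemma is_lim_div_infty (C : R) (p : Rbar) : ~ is_finite p -> is_lim (fun x => C / x) p 0.
Proof.
  intros Hp. apply is_lim_0_scal.
  replace (Finite 0) with (Rbar_inv p) by (destruct p; [now elim Hp | reflexivity | reflexivity]).
  apply is_lim_inv; [apply is_lim_id|].
  destruct p; [now elim Hp | discriminate | discriminate].
Qed.

Lemma filterlim_Rplus_infty (p : Rbar) (h : R) :
  ~ is_finite p -> filterlim (fun x => x + h) (Rbar_locally' p) (Rbar_locally' p).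
Proof.
  destruct p as [r| |]; intros Hp P HP; [now elim Hp| |];
    destruct HP as [M HM]; exists (M - h); intros x Hx; apply HM; lra.
Qed.

Lemma is_lim_shift_infty (f : R -> R) (p l : Rbar) (h : R) :
  ~ is_finite p -> is_lim f p l -> is_lim (fun x => f (x + h)) p l.
Proof. intros Hp Hf. eapply filterlim_comp; [apply filterlim_Rplus_infty, Hp | exact Hf]. Qed.

Lemma Rbar_locally'_infty_interval (p : Rbar) (h : R) (P : R -> Prop) :
  ~ is_finite p -> Rbar_locally' p P ->
  Rbar_locally' p (fun x => forall y, x <= y <= x + h -> P y).
Proof.
  destruct p as [r| |]; intros Hp HP; [now elim Hp| |];
    destruct HP as [M HM]; [exists M | exists (M - h)]; intros x Hx y Hy; apply HM; lra.
Qed.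

Lemma Rabs_derive_le_increment (u u' u'' : R -> R) (x h B : R) :
  (forall y, is_derive u y (u' y)) -> (forall y, is_derive u' y (u'' y)) -> 0 < h ->
  (forall y, x <= y <= x + h -> Rabs (u'' y) <= B) ->
  Rabs (u' x) * h <= Rabs (u (x + h) - u x) + B * h * h.
Proof.
  intros Du Du' Hh HB.
  destruct (MVT_gen u x (x + h) u') as [c [Hc Ec]];
    [intros; apply Du |
     intros; apply continuity_pt_filterlim, (ex_derive_continuous u); eexists; apply Du |].
  rewrite Rmin_left, Rmax_right in Hc by lra.
  destruct (MVT_gen u' x c u'') as [d [Hd Ed]];
    [intros; apply Du' |
     intros; apply continuity_pt_filterlim, (ex_derive_continuous u'); eexists; apply Du' |].
  rewrite Rmin_left, Rmax_right in Hd by lra.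
  assert (HBd : Rabs (u'' d) <= B) by (apply HB; lra).
  replace (Rabs (u' x) * h) with (Rabs ((u (x + h) - u x) - u'' d * (c - x) * h)).
  2: { rewrite <- (Rabs_pos_eq h) at 3 by lra. rewrite <- Rabs_mult, Ec, <- Ed.
       f_equal; ring. }
  eapply Rle_trans; [apply Rabs_triang|]. rewrite Rabs_Ropp.
  apply Rplus_le_compat_l.
  rewrite !Rabs_mult, (Rabs_pos_eq h), (Rabs_pos_eq (c - x)) by lra.
  pose proof (Rabs_pos (u'' d)). apply Rmult_le_compat_r; nra.
Qed.

Lemma is_lim_derive_0 (u u' u'' : R -> R) (p : Rbar) (B : R) :
  ~ is_finite p -> (forall x, is_derive u x (u' x)) -> (forall x, is_derive u' x (u'' x)) ->
  Rbar_locally' p (fun x => Rabs (u'' x) <= B) ->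
  (forall h, 0 < h -> is_lim (fun x => u (x + h) - u x) p 0) ->
  is_lim u' p 0.
Proof.
  intros Hp Du Du' HB Hincr. apply is_lim_0_iff; intros e He.
  set (h := e / (2 * (Rabs B + 1))).
  assert (Hh : 0 < h) by (unfold h; pose proof (Rabs_pos B); apply Rdiv_lt_0_compat; lra).
  assert (HBh : B * h <= e / 2).
  { assert (Rabs B * h + h = e / 2) by (unfold h; field; pose proof (Rabs_pos B); lra).
    pose proof (Rle_abs B); nra. }
  assert (Hi := proj1 (is_lim_0_iff _ _) (Hincr h Hh) (e * h / 2) ltac:(nra)).
  generalize (filter_and _ _ Hi (Rbar_locally'_infty_interval p h _ Hp HB)).
  apply filter_imp; intros x [Hix Hbx].
  pose proof (Rabs_derive_le_increment u u' u'' x h B Du Du' Hh Hbx).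
  apply (Rmult_lt_reg_r h); nra.
Qed.

Lemma is_RInt_gen_pinfty (f F : R -> R) (a l : R) :
  (forall x, is_derive F x (f x)) -> (forall x, continuous f x) -> is_lim F p_infty l ->
  is_RInt_gen f (at_point a) (Rbar_locally p_infty) (l - F a).
Proof.
  intros DF Cf HF.
  apply (is_RInt_gen_ext (Derive F)).
  - apply filter_forall; intros ab x _. now apply is_derive_unique.
  - apply is_RInt_gen_Derive; [| |intros P HP; exact (locally_singleton _ _ HP)|exact HF].
    + apply filter_forall; intros ab x _. eexists; apply DF.
    + apply filter_forall; intros ab x _.
      apply (continuous_ext f); [intros; symmetry; now apply is_derive_unique | apply Cf].
Qed.

Lemma is_RInt_gen_minfty (f F : R -> R) (a l : R) :
  (forall x, is_derive F x (f x)) -> (forall x, continuous f x) -> is_lim F m_infty l ->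
  is_RInt_gen f (Rbar_locally m_infty) (at_point a) (F a - l).
Proof.
  intros DF Cf HF.
  apply (is_RInt_gen_ext (Derive F)).
  - apply filter_forall; intros ab x _. now apply is_derive_unique.
  - apply is_RInt_gen_Derive; [| |exact HF|intros P HP; exact (locally_singleton _ _ HP)].
    + apply filter_forall; intros ab x _. eexists; apply DF.
    + apply filter_forall; intros ab x _.
      apply (continuous_ext f); [intros; symmetry; now apply is_derive_unique | apply Cf].
Qed.

Definition PII_hamiltonian (u u' : R -> R) (x : R) : R :=
  u x ^ 4 + x * u x ^ 2 - u' x ^ 2.

Lemma is_derive_PII_hamiltonian (u u' : R -> R) (x : R) :
  is_PII_solution u u' -> is_derive (PII_hamiltonian u u') x (u x ^ 2).
Proof.
  intros Hsol; destruct (Hsol x) as [Du Du'].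
  unfold PII_hamiltonian; auto_derive.
  - repeat split; eexists; eassumption.
  - replace (Derive (fun y => u y) x) with (u' x) by (symmetry; now apply is_derive_unique).
    replace (Derive (fun y => u' y) x) with (2 * u x ^ 3 + x * u x)
      by (symmetry; now apply is_derive_unique).
    ring.
Qed.

Lemma airy_factor_ge (x : R) :
  1 <= x -> x <= 2 * sqrt PI * Rpower x (1 / 4) * exp (2 / 3 * Rpower x (3 / 2)).
Proof.
  intros Hx.
  assert (HPI : 1 <= sqrt PI).
  { rewrite <- sqrt_1. apply sqrt_le_1_alt. pose proof PI2_3_2. lra. }
  assert (H14 : 1 <= Rpower x (1 / 4)).
  { pose proof (Rle_Rpower x 0 (1 / 4) Hx ltac:(lra)) as E. now rewrite Rpower_O in E by lra. }
  assert (H32 : x <= Rpower x (3 / 2)).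
  { pose proof (Rle_Rpower x 1 (3 / 2) Hx ltac:(lra)) as E. now rewrite Rpower_1 in E by lra. }
  pose proof (exp_ineq1_le (2 / 3 * Rpower x (3 / 2))).
  assert (2 <= 2 * sqrt PI * Rpower x (1 / 4)) by nra.
  nra.
Qed.

Lemma decay_of_is_lim_airy (u : R -> R) (l : R) :
  is_lim (fun x => u x * (2 * sqrt PI * Rpower x (1 / 4) * exp (2 / 3 * Rpower x (3 / 2))))
    p_infty l ->
  Rbar_locally' p_infty (fun x => 1 <= x /\ Rabs (u x) * x <= Rabs l + 1).
Proof.
  intros Hl. apply is_lim_spec in Hl. destruct (Hl (mkposreal 1 Rlt_0_1)) as [N HN].
  exists (Rmax N 1). intros x Hx.
  pose proof (Rmax_l N 1); pose proof (Rmax_r N 1).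
  specialize (HN x ltac:(lra)); simpl in HN.
  pose proof (airy_factor_ge x ltac:(lra)) as Hg.
  set (g := 2 * sqrt PI * Rpower x (1 / 4) * exp (2 / 3 * Rpower x (3 / 2))) in *.
  pose proof (Rabs_triang_inv (u x * g) l).
  rewrite Rabs_mult, (Rabs_pos_eq g) in * by lra.
  pose proof (Rabs_pos (u x)). split; [lra|].
  nra.
Qed.

Section PII_pinfty.

Variables (u u' : R -> R) (C : R).
Hypothesis Hsol : is_PII_solution u u'.
Hypothesis Hdecay : Rbar_locally' p_infty (fun x => 1 <= x /\ Rabs (u x) * x <= C).

Let pinfty_infinite : ~ is_finite p_infty.
Proof. intro H; discriminate H. Qed.

Lemma is_lim_PII_pinfty : is_lim u p_infty 0.
Proof.
  apply (is_lim_0_abs_le u (fun x => C / x)); [|now apply is_lim_div_infty].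
  revert Hdecay; apply filter_imp; intros x [Hx Hux].
  apply (Rmult_le_reg_r x); [lra|]. unfold Rdiv.
  now rewrite Rmult_assoc, Rinv_l, Rmult_1_r by lra.
Qed.

Lemma is_lim_PII_pinfty_mul_sqr : is_lim (fun x => x * u x ^ 2) p_infty 0.
Proof.
  apply (is_lim_0_abs_le _ (fun x => C * C / x)); [|now apply is_lim_div_infty].
  revert Hdecay; apply filter_imp; intros x [Hx Hux].
  apply (Rmult_le_reg_r x); [lra|]. unfold Rdiv.
  rewrite Rmult_assoc, Rinv_l, Rmult_1_r by lra.
  rewrite Rabs_mult, <- RPow_abs, (Rabs_pos_eq x) by lra.
  replace (x * Rabs (u x) ^ 2 * x) with ((Rabs (u x) * x) * (Rabs (u x) * x)) by ring.
  assert (0 <= Rabs (u x) * x) by (pose proof (Rabs_pos (u x)); nra).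
  apply Rmult_le_compat; lra.
Qed.

Lemma PII_pinfty_second_derivative_bound :
  Rbar_locally' p_infty (fun x => Rabs (2 * u x ^ 3 + x * u x) <= 2 * C ^ 3 + C).
Proof.
  revert Hdecay; apply filter_imp; intros x [Hx Hux].
  pose proof (Rabs_pos (u x)).
  assert (Hu : Rabs (u x) <= C) by nra.
  eapply Rle_trans; [apply Rabs_triang|].
  rewrite !Rabs_mult, <- RPow_abs, (Rabs_pos_eq 2), (Rabs_pos_eq x) by lra.
  assert (Rabs (u x) ^ 3 <= C ^ 3) by (apply pow_incr; lra).
  nra.
Qed.

Lemma is_lim_PII_pinfty_derive : is_lim u' p_infty 0.
Proof.
  apply (is_lim_derive_0 u u' (fun x => 2 * u x ^ 3 + x * u x) p_infty (2 * C ^ 3 + C)).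
  - exact pinfty_infinite.
  - intro x; apply Hsol.
  - intro x; apply Hsol.
  - exact PII_pinfty_second_derivative_bound.
  - intros h _. apply is_lim_0_minus; [apply is_lim_shift_infty|]; auto using is_lim_PII_pinfty.
Qed.

Lemma is_lim_PII_hamiltonian_pinfty : is_lim (PII_hamiltonian u u') p_infty 0.
Proof.
  apply (is_lim_ext (fun x => (u x * u x) * (u x * u x) + x * u x ^ 2 - u' x * u' x));
    [intros x; unfold PII_hamiltonian; ring|].
  pose proof is_lim_PII_pinfty. pose proof is_lim_PII_pinfty_derive.
  apply is_lim_0_minus; [apply is_lim_0_plus|]; auto using is_lim_0_mult, is_lim_PII_pinfty_mul_sqr.
Qed.

End PII_pinfty.

Lemma Rpower_neg_5_2_mul_sqr_le (t : R) : 1 <= t -> Rpower t (- 5 / 2) * (t * t) <= 1.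
Proof.
  intros Ht.
  pose proof (Rle_Rpower t (- 5 / 2) (- INR 2) Ht ltac:(simpl; lra)) as E.
  rewrite Rpower_Ropp, Rpower_pow in E by lra.
  replace (t * t) with (t ^ 2) by ring.
  apply (Rmult_le_compat_r (t ^ 2)) in E; [|apply pow_le; lra].
  now rewrite Rinv_l in E by (apply pow_nonzero; lra).
Qed.

Lemma sqrt_sub_le (a b : R) : 0 <= a <= b -> 0 < b -> sqrt b - sqrt a <= (b - a) / sqrt b.
Proof.
  intros Hab Hb.
  pose proof (sqrt_lt_R0 b Hb). pose proof (sqrt_pos a).
  pose proof (sqrt_le_1_alt a b (proj2 Hab)).
  apply (Rmult_le_reg_r (sqrt b)); [lra|]. unfold Rdiv.
  rewrite Rmult_assoc, Rinv_l, Rmult_1_r by lra.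
  pose proof (sqrt_sqrt a (proj1 Hab)). pose proof (sqrt_sqrt b (Rlt_le _ _ Hb)).
  nra.
Qed.

Lemma is_lim_inv_sqrt_half_opp : is_lim (fun x => / sqrt (- x / 2)) m_infty 0.
Proof.
  change (Finite 0) with (Rbar_inv p_infty).
  apply is_lim_inv; [|discriminate].
  eapply filterlim_comp; [|exact filterlim_sqrt_p].
  intros P [M HM]. exists (- 2 * M). intros x Hx. apply HM. lra.
Qed.

Lemma is_lim_sqrt_half_opp_increment (h : R) :
  0 < h -> is_lim (fun x => sqrt (- (x + h) / 2) - sqrt (- x / 2)) m_infty 0.
Proof.
  intros Hh.
  apply (is_lim_0_abs_le _ (fun x => h / 2 * / sqrt (- x / 2)));
    [|apply is_lim_0_scal, is_lim_inv_sqrt_half_opp].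
  exists (- h). intros x Hx.
  rewrite Rabs_minus_sym, Rabs_pos_eq.
  - replace (h / 2) with (- x / 2 - - (x + h) / 2) by field.
    apply sqrt_sub_le; lra.
  - apply Rge_le, Rge_minus, Rle_ge, sqrt_le_1_alt; lra.
Qed.

Section PII_minfty.

Variables (u u' : R -> R) (eps M : R).
Hypothesis Hsol : is_PII_solution u u'.
Hypothesis Heps : eps = 1 \/ eps = -1.
Hypothesis Hasym :
  Rbar_locally' m_infty
    (fun x => x <= -1 /\ Rabs (u x - eps * sqrt (- x / 2)) * (x * x) <= M).

Let minfty_infinite : ~ is_finite m_infty.
Proof. intro H; discriminate H. Qed.

Lemma PII_minfty_estimates :
  Rbar_locally' m_infty (fun x => x <= -1 /\
    Rabs (u x - eps * sqrt (- x / 2)) * (- x) <= M /\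
    Rabs (u x ^ 2 + x / 2) * (- x) <= 2 * M + M * M /\
    Rabs (u x) <= - x + M).
Proof.
  revert Hasym; apply filter_imp; intros x [Hx Hd].
  set (s := sqrt (- x / 2)) in *. set (d := u x - eps * s) in *.
  assert (Hs2 : s * s = - x / 2) by (apply sqrt_sqrt; lra).
  assert (Hs0 : 0 <= s) by apply sqrt_pos.
  assert (Hs : s <= - x) by (destruct (Rle_lt_dec s (- x)); [lra | nra]).
  assert (Habs_eps : Rabs eps = 1)
    by (destruct Heps; subst; unfold Rabs; destruct Rcase_abs; lra).
  assert (Hu : u x = eps * s + d) by (unfold d; ring).
  assert (Hsq : u x ^ 2 + x / 2 = 2 * eps * s * d + d * d).
  { rewrite Hu. replace (x / 2) with (- (s * s)) by lra.
    destruct Heps; subst; ring. }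
  set (D := Rabs d) in *. assert (HD : 0 <= D) by apply Rabs_pos.
  assert (Hxx : 1 <= x * x) by nra.
  assert (HDM : D <= M) by nra.
  split; [lra|]. split; [nra|]. split.
  - rewrite Hsq.
    assert (Rabs (2 * eps * s * d + d * d) <= 2 * s * D + D * D).
    { eapply Rle_trans; [apply Rabs_triang|].
      rewrite !Rabs_mult, Habs_eps, (Rabs_pos_eq 2), (Rabs_pos_eq s) by lra. unfold D; lra. }
    assert (- x <= x * x * (x * x)) by nra.
    assert (D * (x * x) * (D * (x * x)) <= M * M) by (apply Rmult_le_compat; nra).
    nra.
  - rewrite Hu. eapply Rle_trans; [apply Rabs_triang|].
    rewrite Rabs_mult, Habs_eps, (Rabs_pos_eq s) by lra. unfold D in *; lra.
Qed.

Lemma is_lim_PII_minfty_sqr : is_lim (fun x => u x ^ 2 + x / 2) m_infty 0.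
Proof.
  apply (is_lim_0_abs_le _ (fun x => - (2 * M + M * M) / x)); [|now apply is_lim_div_infty].
  generalize PII_minfty_estimates; apply filter_imp; intros x (Hx & _ & Hsq & _).
  apply (Rmult_le_reg_r (- x)); [lra|].
  replace (- (2 * M + M * M) / x * - x) with (2 * M + M * M) by (field; lra). exact Hsq.
Qed.

Lemma PII_minfty_second_derivative_bound :
  Rbar_locally' m_infty
    (fun x => Rabs (2 * u x ^ 3 + x * u x) <= 2 * (1 + M) * (2 * M + M * M)).
Proof.
  generalize PII_minfty_estimates; apply filter_imp; intros x (Hx & Hd & Hsq & Hu).
  replace (2 * u x ^ 3 + x * u x) with (2 * u x * (u x ^ 2 + x / 2)) by field.
  rewrite !Rabs_mult, (Rabs_pos_eq 2) by lra.
  set (w := Rabs (u x ^ 2 + x / 2)) in *. assert (Hw : 0 <= w) by apply Rabs_pos.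
  assert (HM : 0 <= M) by (pose proof (Rabs_pos (u x - eps * sqrt (- x / 2))); nra).
  assert (Hw1 : w <= 2 * M + M * M) by nra.
  assert (Rabs (u x) * w <= (- x + M) * w) by (apply Rmult_le_compat_r; lra).
  nra.
Qed.

Lemma is_lim_PII_minfty_derive : is_lim u' m_infty 0.
Proof.
  apply (is_lim_derive_0 u u' (fun x => 2 * u x ^ 3 + x * u x) m_infty
           (2 * (1 + M) * (2 * M + M * M))).
  - exact minfty_infinite.
  - intro x; apply Hsol.
  - intro x; apply Hsol.
  - exact PII_minfty_second_derivative_bound.
  - intros h Hh.
    set (d := fun x => u x - eps * sqrt (- x / 2)).
    assert (Hd : is_lim d m_infty 0).
    { apply (is_lim_0_abs_le _ (fun x => - M / x)); [|now apply is_lim_div_infty].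
      generalize PII_minfty_estimates; apply filter_imp; intros x (Hx & Hdx & _).
      apply (Rmult_le_reg_r (- x)); [lra|].
      replace (- M / x * - x) with M by (field; lra). exact Hdx. }
    apply (is_lim_ext (fun x => d (x + h) - d x
                                + eps * (sqrt (- (x + h) / 2) - sqrt (- x / 2))));
      [intros x; unfold d; ring|].
    apply is_lim_0_plus; [apply is_lim_0_minus|apply is_lim_0_scal];
      auto using is_lim_shift_infty, is_lim_sqrt_half_opp_increment.
Qed.

Lemma is_lim_PII_hamiltonian_minfty :
  is_lim (fun x => x ^ 2 / 4 + PII_hamiltonian u u' x) m_infty 0.
Proof.
  apply (is_lim_ext (fun x => (u x ^ 2 + x / 2) * (u x ^ 2 + x / 2) - u' x * u' x));
    [intros x; unfold PII_hamiltonian; field|].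
  pose proof is_lim_PII_minfty_sqr. pose proof is_lim_PII_minfty_derive.
  apply is_lim_0_minus; auto using is_lim_0_mult.
Qed.

End PII_minfty.

Lemma hastings_mcleod_asymptotics_minfty (u : R -> R) (eps : R) :
  (exists M K : R, K < 0 /\
     forall x : R, x <= K ->
       Rabs (u x - eps * sqrt (- x / 2)) <= M * Rpower (- x) (- 5 / 2)) ->
  exists M : R, Rbar_locally' m_infty
    (fun x => x <= -1 /\ Rabs (u x - eps * sqrt (- x / 2)) * (x * x) <= M).
Proof.
  intros (M & K & _ & HK). exists (Rabs M), (Rmin K (-1)). intros x Hx.
  pose proof (Rmin_l K (-1)); pose proof (Rmin_r K (-1)).
  split; [lra|].
  pose proof (HK x ltac:(lra)) as Hd.
  pose proof (Rpower_neg_5_2_mul_sqr_le (- x) ltac:(lra)) as Hp.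
  assert (Hp0 : 0 < Rpower (- x) (- 5 / 2)) by apply exp_pos.
  replace (- x * - x) with (x * x) in Hp by ring.
  pose proof (Rle_abs M). pose proof (Rabs_pos M).
  assert (0 <= x * x) by nra.
  assert (M * Rpower (- x) (- 5 / 2) <= Rabs M * Rpower (- x) (- 5 / 2)) by nra.
  nra.
Qed.

Theorem mainTheorem9 (u : R -> R) (eps : R) (HM : hastings_mcleod u eps) (c : R) :
  exists I1 I2 : R,
    is_RInt_gen (fun y => u y ^ 2) (at_point c) (Rbar_locally p_infty) I1 /\
    is_RInt_gen (fun y => u y ^ 2 + y / 2) (Rbar_locally m_infty) (at_point c) I2 /\
    I1 + I2 = c ^ 2 / 4.
Proof.
  destruct HM as (Heps & [u' Hsol] & Hasym & Hairy).
  destruct (hastings_mcleod_asymptotics_minfty u eps Hasym) as [M HM].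
  assert (Du : forall x, ex_derive u x) by (intro x; eexists; apply Hsol).
  set (H := PII_hamiltonian u u').
  assert (DH : forall x, is_derive H x (u x ^ 2)) by (intro x; now apply is_derive_PII_hamiltonian).
  exists (0 - H c), ((c ^ 2 / 4 + H c) - 0). split; [|split; [|ring]].
  - apply is_RInt_gen_pinfty; [exact DH| |].
    + intro x; apply (ex_derive_continuous (fun y => u y ^ 2)); auto_derive; auto.
    + exact (is_lim_PII_hamiltonian_pinfty u u' _ Hsol (decay_of_is_lim_airy u eps Hairy)).
  - apply (is_RInt_gen_minfty _ (fun x => x ^ 2 / 4 + H x)).
    + intro x; auto_derive; [eexists; apply DH|].
      replace (Derive (fun y => H y) x) with (u x ^ 2) by (symmetry; now apply is_derive_unique).
      field.
    + intro x; apply (ex_derive_continuous (fun y => u y ^ 2 + y / 2)); auto_derive; auto.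
    + exact (is_lim_PII_hamiltonian_minfty u u' eps M Hsol Heps HM).
Qed.
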